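(* Let $M,N\in\mathbb{N}^*$ and let $F$ be a set of $M+1$ points of $[0,1]$ whose elements satisfy $\rho_0=0<\rho_1<\dots<\rho_M=1$. Let $X(1/N)=\{t\in\,]0,1]:\ ]t-1/N,t]\cap F=\emptyset\}$. Then \[ \mathrm{card}\Big\{j\in\{1,\dots,N\}:\ \Big]\frac{j-1}{N},\frac jN\Big]\cap F=\emptyset\Big\} = N\,\mathrm{mes}\big(X(1/N)\big)+\sum_{\substack{1\le i\le M\\ \rho_i-\rho_{i-1}\ge 1/N}}\big(\{-N\rho_i\}-\{-N\rho_{i-1}\}\big). \]
   Context: $\mathrm{mes}$ denotes Lebesgue measure and $\{x\}$ the fractional part of the real number $x$. *)

From HB Require Import structures.
From mathcomp Require Import all_boot all_order all_algebra.
From mathcomp Require Import all_classical all_reals all_analysis.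
Set Implicit Arguments. Unset Strict Implicit. Unset Printing Implicit Defensive.
Import Order.TTheory GRing.Theory Num.Theory.
Local Open Scope ring_scope.
Local Open Scope classical_set_scope.

Definition fracpart {R : realType} (x : R) : R := x - (Num.floor x)%:~R.

Definition ptset {R : realType} (M : nat) (rho : nat -> R) : set R :=
  [set x | exists2 i, (i <= M)%N & x = rho i].

Definition ocI {R : realType} (a b : R) : set R := [set x | a < x <= b].

Definition Xset {R : realType} (N : nat) (F : set R) : set R :=
  [set t | ocI 0 1 t /\ ocI (t - N%:R^-1) t `&` F = set0].

From HB Require Import structures.
From mathcomp Require Import all_boot all_order all_algebra.
From mathcomp Require Import all_classical all_reals all_analysis.
From mathcomp Require Import lra zify.
Set Implicit Arguments.
Unset Strict Implicit.
Unset Printing Implicit Defensive.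
Import Order.TTheory GRing.Theory Num.Theory.
Local Open Scope ring_scope.
Local Open Scope classical_set_scope.

(* An interval ]lo, hi] with lo < hi and 0 < hi <= 1 misses F exactly when
   rho_i <= lo and hi < rho_(i+1) for some (necessarily unique) i.  Hence
   X(1/N) is the disjoint union of the intervals [rho_i + 1/N, rho_(i+1)[,
   and the empty cells ](j-1)/N, j/N] can be counted gap by gap: gap i holds
   the cells with N rho_i + 1 <= j < N rho_(i+1), and there are
   ceil(N rho_(i+1)) - ceil(N rho_i) - 1 of them when this is positive.  As
   {-x} = ceil x - x, that number is N times the measure of the i-th piece of
   X(1/N), plus {-N rho_(i+1)} - {-N rho_i} when the gap has length >= 1/N. *)

Lemma sum_ord_between (n p q : nat) :
  (\sum_(j < n) ((p < j) && (j < q) : nat) = minn n q - p.+1)%N.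
Proof.
elim: n => [|n IH]; first by rewrite big_ord0; lia.
rewrite big_ord_recr /= IH.
by have [?|?] := ltnP p n; have [?|?] := ltnP n q; lia.
Qed.

Lemma bool_sum_unique (n : nat) (b : nat -> bool) (P : bool) :
  (P <-> exists2 i, (i < n)%N & b i) ->
  (forall i j, (i < n)%N -> (j < n)%N -> b i -> b j -> i = j) ->
  (P : nat) = (\sum_(i < n) (b i : nat))%N.
Proof.
move=> P_ex b_uniq; have [HP|HP] := boolP P.
  have [i0 i0n bi0] := proj1 P_ex HP.
  rewrite (bigD1 (Ordinal i0n)) //= bi0 big1 // => k /negP k_neq.
  case bk: (b k) => //; case: k_neq; apply/eqP/val_inj.
  exact: b_uniq (ltn_ord k) i0n bk bi0.
rewrite big1 // => k _; case bk: (b k) => //; case/negP: HP.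
by apply/P_ex; exists k.
Qed.

Section CeilCount.
Variable R : realType.

Lemma fracpartN (x : R) : fracpart (- x) = (Num.ceil x)%:~R - x.
Proof. by rewrite /fracpart floorNceil opprK intrN; lra. Qed.

Lemma ceil_natE (x : R) : 0 <= x -> (Num.ceil x)%:~R = (`|Num.ceil x|%N%:R : R).
Proof. by move=> x0; rewrite natr_absz ger0_norm // ceil_ge0; lra. Qed.

Lemma count_nat_between (n : nat) (x y : R) :
  0 <= x -> x <= y -> y <= n%:R ->
  (\sum_(j < n.+1) ((x <= j%:R - 1)%R && (j%:R < y)%R : nat) =
   `|Num.ceil y| - `|Num.ceil x|.+1)%N.
Proof.
move=> x0 xy yn.
have cx0 : 0 <= Num.ceil x by rewrite ceil_ge0; lra.
have cy0 : 0 <= Num.ceil y by rewrite ceil_ge0; lra.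
have ceil_y_n : (`|Num.ceil y| <= n)%N.
  have : Num.ceil y <= n%:Z by rewrite ceil_le_int.
  lia.
set p := `|Num.ceil x|%N; set q := `|Num.ceil y|%N.
transitivity (\sum_(j < n.+1) ((p < j) && (j < q)) : nat)%N; last first.
  by rewrite sum_ord_between; lia.
apply: eq_bigr => -[j /= _] _; congr (nat_of_bool (_ && _)).
  rewrite -[j%:R - 1](intrB R j 1) -ceil_le_int /p.
  (* [set] merges the copies of [Num.ceil x] that differ only in their
     (convertible) structure instances, which [lia] would see as distinct. *)
  by move: cx0; set c := Num.ceil x => c0; apply/idP/idP; lia.
rewrite -[j%:R]/((j%:Z)%:~R) -ceil_gt_int /q.
by move: cy0; set c := Num.ceil y => c0; apply/idP/idP; lia.
Qed.

Lemma ceil_gap_fracpart (x y : R) : 0 <= x -> x <= y ->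
  ((`|Num.ceil y| - `|Num.ceil x|.+1)%N%:R : R) =
  (if x + 1 < y then y - x - 1 else 0) +
  (if 1 <= y - x then fracpart (- y) - fracpart (- x) else 0).
Proof.
move=> x0 xy; rewrite !fracpartN.
have := ceil_itv x; have := ceil_itv y.
rewrite !intrB !ceil_natE //; try lra.
set p := `|Num.ceil x|%N; set q := `|Num.ceil y|%N => /andP[qy yq] /andP[px xp].
have [gap_ge1|gap_lt1] := lerP 1 (y - x).
  have pq : (p < q)%N by rewrite -(ltr_nat R); lra.
  by rewrite natrB // -natr1; case: ltrP; lra.
have qp : (q <= p.+1)%N by rewrite -ltnS -(ltr_nat R) -addn2 natrD; lra.
rewrite (_ : (q - p.+1)%N = 0%N); last by lia.
by case: ltrP; lra.
Qed.

End CeilCount.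

Section GapDecomposition.
Variables (R : realType) (M N : nat) (rho : nat -> R).
Hypotheses (rho0 : rho 0%N = 0) (rhoM : rho M = 1)
  (rho_incr : forall i, (i < M)%N -> rho i < rho i.+1).
Hypothesis N_gt0 : (0 < N)%N.

Definition within_gap (i : nat) (lo hi : R) := (rho i <= lo) && (hi < rho i.+1).

Lemma rho_le (k l : nat) : (k <= l)%N -> (l <= M)%N -> rho k <= rho l.
Proof.
move=> kl lM; apply: (@homo_leq_in _ [pred i | (i <= M)%N] rho <=%R) => //.
- exact: le_trans.
- by move=> i j _ /[!inE] jM m /andP[_ mj]; exact: ltnW (leq_trans mj jM).
- by move=> i _ /[!inE] iM; exact/ltW/rho_incr.
- exact: leq_trans lM.
Qed.

Lemma rho_ge0 (i : nat) : (i <= M)%N -> 0 <= rho i.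
Proof. by rewrite -rho0; exact: rho_le. Qed.

Lemma rho_le1 (i : nat) : (i <= M)%N -> rho i <= 1.
Proof. by move=> iM; rewrite -rhoM; exact: rho_le iM (leqnn M). Qed.

Lemma within_gap_uniq (lo hi : R) (i j : nat) : lo <= hi ->
  (i < M)%N -> (j < M)%N -> within_gap i lo hi -> within_gap j lo hi -> i = j.
Proof.
move=> lohi iM jM /andP[? ?] /andP[? ?].
have [ij|ji|//] := ltngtP i j; exfalso.
  by have := rho_le ij (ltnW jM); lra.
by have := rho_le ji (ltnW iM); lra.
Qed.

Lemma ocI_ptset_eq0 (lo hi : R) : lo < hi -> 0 < hi -> hi <= 1 ->
  (ocI lo hi `&` ptset M rho = set0) <-> exists2 i, (i < M)%N & within_gap i lo hi.
Proof.
move=> lohi hi0 hi1; split => [cell0|[i iM /andP[lo_i hi_i]]]; last first.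
  apply/seteqP; split => x //= [+ [k kM ekx]]; rewrite {x}ekx => /andP[lox xhi].
  have [ki|ik] := leqP k i.
    by have := rho_le ki (ltnW iM); lra.
  by have := rho_le ik kM; lra.
have notin k : (k <= M)%N -> ocI lo hi (rho k) -> False.
  move=> kM rho_k; suff : (ocI lo hi `&` ptset M rho) (rho k) by rewrite cell0.
  by split => //; exists k.
have ex_above : exists k, (hi <= rho k) && (k <= M)%N.
  by exists M; rewrite rhoM hi1 leqnn.
case: (ex_minnP ex_above) => k /andP[hi_k kM] k_min.
have k_gt0 : (0 < k)%N.
  by rewrite lt0n; apply: contraTneq hi_k => ->; rewrite rho0 -ltNge.
have below : rho k.-1 < hi.
  rewrite ltNge; apply/negP => hi_k1.
  by have := k_min k.-1; rewrite hi_k1 (leq_trans (leq_pred k) kM); lia.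
exists k.-1; first by lia.
rewrite /within_gap prednK //; apply/andP; split.
  by rewrite leNgt; apply/negP => lo_k1; apply: (notin k.-1); [lia | rewrite /ocI /= lo_k1 ltW].
rewrite lt_neqAle hi_k andbT; apply/negP => /eqP hi_eq.
by apply: (notin k) => //; rewrite /ocI /= -hi_eq lohi lexx.
Qed.

Let Npos : (0 : R) < N%:R. Proof. by rewrite ltr0n. Qed.

Lemma Xset_bigcup :
  Xset N (ptset M rho) = \big[setU/set0]_(i < M) `[rho i + N%:R^-1, rho i.+1[.
Proof.
have Ninv_gt0 : (0 : R) < N%:R^-1 by rewrite invr_gt0.
rewrite -(bigcup_mkord M (fun i => `[rho i + N%:R^-1, rho i.+1[%classic)).
apply/seteqP; split => t.
  case=> /andP[t0 t1] /ocI_ptset_eq0 [|||i iM /andP[? ?]]; try lra.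
  by exists i => //=; rewrite in_itv /=; apply/andP; split; lra.
case=> i iM; rewrite /= in_itv /= => /andP[? ?].
have := rho_ge0 (ltnW iM); have := rho_le1 iM => ? ?.
split; first by rewrite /ocI /=; apply/andP; split; lra.
apply/ocI_ptset_eq0; [lra | lra | lra |].
by exists i => //; apply/andP; split; lra.
Qed.

Lemma lebesgue_Xset : lebesgue_measure (Xset N (ptset M rho)) =
  (\sum_(i < M) (if rho i + N%:R^-1 < rho i.+1
                 then rho i.+1 - (rho i + N%:R^-1) else 0))%:E.
Proof.
have Ninv_gt0 : (0 : R) < N%:R^-1 by rewrite invr_gt0.
pose A i := `[rho i + N%:R^-1, rho i.+1[%classic.
have A_disj : trivIset `I_M A.
  move=> i j iM jM [t []]; rewrite /A /= !in_itv /= => /andP[? ?] /andP[? ?].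
  by apply: (@within_gap_uniq (t - N%:R^-1) t) => //; [lra | apply/andP; split; lra..].
have A_meas k : (k < M)%N -> measurable (A k) by move=> _; exact: measurable_itv.
rewrite Xset_bigcup (measure_semi_additive_ord_I lebesgue_measure A_meas A_disj); last first.
  by apply: bigsetU_measurable => *; exact: measurable_itv.
rewrite -sumEFin; apply: eq_bigr => i _.
by rewrite /A; apply: (eq_trans (lebesgue_measure_itv _)); rewrite /= lte_fin; case: ifP.
Qed.

Lemma scaled_lebesgue_Xset :
  (N%:R%:E * lebesgue_measure (Xset N (ptset M rho)))%E =
  (\sum_(i < M) (if N%:R * rho i + 1 < N%:R * rho i.+1
                 then N%:R * rho i.+1 - N%:R * rho i - 1 else 0))%:E.
Proof.
rewrite lebesgue_Xset -EFinM mulr_sumr; congr _%:E; apply: eq_bigr => i _.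
rewrite -(ltr_pM2l Npos) mulrDr mulfV ?gt_eqF //.
by case: ifP => _; rewrite ?mulr0 // mulrBr mulrDr mulfV ?gt_eqF //; lra.
Qed.

Lemma scaled_gap_bounds (i : nat) : (i < M)%N ->
  [/\ 0 <= N%:R * rho i, N%:R * rho i <= N%:R * rho i.+1 & N%:R * rho i.+1 <= N%:R].
Proof.
move=> iM; split.
- by apply: mulr_ge0; [exact: ltW | exact/rho_ge0/ltnW].
- by rewrite ler_pM2l //; exact/ltW/rho_incr.
- by rewrite -[X in _ <= X]mulr1 ler_pM2l // rho_le1.
Qed.

Lemma card_empty_cells :
  (#|[set j : 'I_N.+1 | (0 < j)%N &&
      `[< ocI ((j%:R - 1) / N%:R) (j%:R / N%:R) `&` ptset M rho = set0 >]]|)%N =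
  (\sum_(i < M) (`|Num.ceil (N%:R * rho i.+1)| - `|Num.ceil (N%:R * rho i)|.+1))%N.
Proof.
rewrite -sum1_card big_mkcond /=.
under [RHS]eq_bigr => i _.
  have [? ? ?] := scaled_gap_bounds (ltn_ord i).
  rewrite -(@count_nat_between R N) //.
  over.
rewrite [RHS]exchange_big /=; apply: eq_bigr => j _; rewrite unfold_in /= asboolb.
set lo := (j%:R - 1) / N%:R; set hi := j%:R / N%:R.
have j_le_N : (j%:R : R) <= N%:R by rewrite ler_nat -ltnS.
have lohi : lo < hi by rewrite ltr_pM2r ?invr_gt0 //; lra.
have hi1 : hi <= 1 by rewrite ler_pdivrMr // mul1r.
rewrite (eq_bigr (fun i : 'I_M => within_gap i lo hi : nat)); last first.
  by move=> i _; rewrite /within_gap ler_pdivlMr // ltr_pdivrMr // ![_ * N%:R]mulrC.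
apply: (@bool_sum_unique M (fun i => within_gap i lo hi)) => [|i k iM kM]; last first.
  exact: within_gap_uniq (ltW lohi) iM kM.
split=> [/andP[j0 /asboolP cell0]|[i iM gap_i]].
  have hi0 : 0 < hi by rewrite divr_gt0 // ltr0n.
  exact: (ocI_ptset_eq0 lohi hi0 hi1).1 cell0.
have hi0 : 0 < hi by case/andP: gap_i; have := rho_ge0 (ltnW iM); lra.
apply/andP; split; last by apply/asboolP/(ocI_ptset_eq0 lohi hi0 hi1); exists i.
by move: hi0; rewrite pmulr_lgt0 ?invr_gt0 // ltr0n.
Qed.

End GapDecomposition.

Theorem proposition4 (R : realType) (M N : nat) (rho : nat -> R)
  (hM : (0 < M)%N) (hN : (0 < N)%N)
  (h0 : rho 0%N = 0) (hMM : rho M = 1)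
  (hinc : forall i, (i < M)%N -> rho i < rho i.+1) :
  ((#|[set j : 'I_N.+1 | (0 < j)%N &&
        `[< ocI ((j%:R - 1) / N%:R) (j%:R / N%:R) `&` ptset M rho = set0 >]]|)%:R
    : R)%:E =
  (N%:R%:E * lebesgue_measure (Xset N (ptset M rho)) +
   (\sum_(1 <= i < M.+1 | N%:R^-1 <= rho i - rho i.-1)
       (fracpart (- (N%:R * rho i)) - fracpart (- (N%:R * rho i.-1))))%:E)%E.
Proof.
have Npos : (0 : R) < N%:R by rewrite ltr0n.
rewrite scaled_lebesgue_Xset // card_empty_cells // natr_sum -EFinD.
congr _%:E; rewrite big_add1 /= big_mkord [X in _ + X]big_mkcond -big_split /=.
apply: eq_bigr => i _; have [? ? _] := scaled_gap_bounds h0 hMM hinc hN (ltn_ord i).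
have -> : (N%:R^-1 <= rho i.+1 - rho i) = (1 <= N%:R * rho i.+1 - N%:R * rho i).
  by rewrite -(ler_pM2l Npos) mulfV ?gt_eqF // mulrBr.
exact: ceil_gap_fracpart.
Qed.
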